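(* Let $E^3$ and $O^3$ denote the sets of even-parity and odd-parity 3-bit strings and let $A\subseteq E^3$. For $n\ge1$, let Alice, Bob and Carol hold $X=(x_1,\dots,x_n)$, $Y=(y_1,\dots,y_n)$, $Z=(z_1,\dots,z_n)\in\{0,1\}^n$ under the promise that $x_iy_iz_i\in A\cup O^3$ for all $i$, and let $g_A(X,Y,Z)=\bigoplus_{i=1}^n t_A(x_iy_iz_i)$, where $t_A(w)=1$ if $w\in A$ and $0$ otherwise. Then $g_A$ can be computed by a distributed protocol using only local classical operations, no a priori quantum entanglement, and two classical bits of communication in total, at the end of which Alice knows the value of $g_A(X,Y,Z)$. *)

From mathcomp Require Import all_boot.
Set Implicit Arguments. Unset Strict Implicit. Unset Printing Implicit Defensive.

Definition bits3 := (bool * bool * bool)%type.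

Definition parity (w : bits3) : bool :=
  let: (a, b, c) := w in addb (addb a b) c.

Definition E3 : {set bits3} := [set w | ~~ parity w].
Definition O3 : {set bits3} := [set w | parity w].

Definition tA (A : {set bits3}) (w : bits3) : bool := w \in A.

Definition gA (A : {set bits3}) (n : nat) (X Y Z : {ffun 'I_n -> bool}) : bool :=
  \big[addb/false]_(i < n) tA A (X i, Y i, Z i).

(* Deterministic classical three-party communication protocols (no shared
   entanglement, no shared randomness), number-in-hand, broadcast model:
   at each internal node a party sends one classical bit, computed locally
   from its own input (and the transcript so far, encoded by the position
   in the tree).  At a leaf, Alice outputs a bit computed from her own input
   and the transcript (again encoded by the leaf position). *)
Inductive party := Alice | Bob | Carol.

Inductive protocol (T : Type) : Type :=
| Leaf : (T -> bool) -> protocol T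
| Node : party -> (T -> bool) -> protocol T -> protocol T -> protocol T.

Definition input_of (T : Type) (s : party) (x y z : T) : T :=
  match s with Alice => x | Bob => y | Carol => z end.

Fixpoint run (T : Type) (p : protocol T) (x y z : T) : bool :=
  match p with
  | Leaf f => f x
  | Node s m p0 p1 => if m (input_of s x y z) then run p1 x y z else run p0 x y z
  end.

Fixpoint cost (T : Type) (p : protocol T) : nat :=
  match p with
  | Leaf _ => 0
  | Node _ _ p0 p1 => (maxn (cost p0) (cost p1)).+1
  end.

From mathcomp Require Import all_boot.

Set Implicit Arguments.
Unset Strict Implicit.
Unset Printing Implicit Defensive.

(* Under the promise every triple in A has even parity and every other triple
   odd parity, so t_A(w) = 1 + w1 + w2 + w3 over GF(2).  Summing over i,
   g_A(X,Y,Z) = n + |X| + |Y| + |Z| (mod 2), where |.| is the parity of a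
   string: Bob and Carol broadcast the parities of their strings and Alice adds
   n and her own parity. *)

Definition xorsum {n : nat} (X : {ffun 'I_n -> bool}) : bool :=
  \big[addb/false]_(i < n) X i.

Lemma big_addb_negb (n : nat) (F : 'I_n -> bool) :
  \big[addb/false]_(i < n) ~~ F i = odd n (+) \big[addb/false]_(i < n) F i.
Proof.
elim: n F => [|n IHn] F; first by rewrite !big_ord0.
rewrite !big_ord_recr /= IHn.
by case: (odd n); case: (F ord_max); case: (\big[addb/false]_(i < n) _).
Qed.

Lemma tA_promise (A : {set bits3}) (w : bits3) :
  A \subset E3 -> w \in A :|: O3 -> tA A w = ~~ parity w.
Proof.
move=> sAE; rewrite /tA in_setU inE.
have [Aw _ | nAw /= odd_w] := boolP (w \in A); last by rewrite odd_w.
by have := subsetP sAE w Aw; rewrite inE.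
Qed.

Lemma gA_promise (A : {set bits3}) (n : nat) (X Y Z : {ffun 'I_n -> bool}) :
  A \subset E3 -> (forall i : 'I_n, (X i, Y i, Z i) \in A :|: O3) ->
  gA A X Y Z = odd n (+) xorsum X (+) xorsum Y (+) xorsum Z.
Proof.
move=> sAE promise; rewrite /gA.
rewrite (eq_bigr (fun i => ~~ (X i (+) Y i (+) Z i))); last first.
  by move=> i _; rewrite tA_promise.
by rewrite big_addb_negb !big_split /= !addbA.
Qed.

Section BroadcastTwoBits.

Variable T : Type.
Variables (msgB msgC : T -> bool) (out : T -> bool -> bool -> bool).

Definition broadcast_protocol : protocol T :=
  Node Bob msgB
    (Node Carol msgC (Leaf (fun x => out x false false)) (Leaf (fun x => out x false true)))
    (Node Carol msgC (Leaf (fun x => out x true false)) (Leaf (fun x => out x true true))).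

Lemma cost_broadcast_protocol : cost broadcast_protocol = 2.
Proof. by []. Qed.

Lemma run_broadcast_protocol (x y z : T) :
  run broadcast_protocol x y z = out x (msgB y) (msgC z).
Proof. by rewrite /=; case: (msgB y); case: (msgC z). Qed.

End BroadcastTwoBits.

Theorem corollary3 (A : {set bits3}) (HA : A \subset E3) (n : nat) (Hn : 0 < n) :
  exists p : protocol {ffun 'I_n -> bool},
    cost p <= 2 /\
    forall X Y Z : {ffun 'I_n -> bool},
      (forall i : 'I_n, (X i, Y i, Z i) \in A :|: O3) ->
      run p X Y Z = gA A X Y Z.
Proof.
exists (broadcast_protocol xorsum xorsum
          (fun X b c => odd n (+) xorsum X (+) b (+) c)).
split; first by rewrite cost_broadcast_protocol.
by move=> X Y Z promise; rewrite run_broadcast_protocol (gA_promise HA promise).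
Qed.
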